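(* Let $k\ge3$, $\ell=k-2$, and let $\mathcal C\subseteq(S^{k-1})^n$ be a vector $k$-separating code with $|\mathcal C|>k$. Let $\{S_1,\dots,S_{k-1}\}$ be a uniformly random $(k-1)$-element subset of $\mathcal C$ and let $j$ be uniform in $[n]$ independent of it. Then \[ \frac{\log_2(|\mathcal C|-\ell)}{n}\le \Pr\bigl[S_{a}(j)\perp S_{b}(j)\text{ for all } a\neq b\bigr], \] where $S_a(j)$ is the $j$-th coordinate of $S_a$. Moreover, if $Y_1,\dots,Y_{k-1}$ are drawn independently and uniformly from $\mathcal C$ (with replacement) and $j$ uniform in $[n]$, then \[ \Bigl(1-\frac{\ell^2}{|\mathcal C|}\Bigr)\frac{\log_2(|\mathcal C|-\ell)}{n}\le \Pr\bigl[Y_a(j)\perp Y_b(j)\text{ for all }a\ne b\bigr]. \]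
   Context: $S^{k-1}$ is the unit sphere in $\mathbb R^k$. A subset $\mathcal C\subseteq (S^{k-1})^n$ is vector $k$-separating if for any $k$ distinct codewords $c^{(1)},\dots,c^{(k)}\in\mathcal C$ there is a coordinate $i\in[n]$ such that $c^{(1)}_i,\dots,c^{(k)}_i$ are mutually orthogonal. *)

From HB Require Import structures.
From mathcomp Require Import all_boot all_order all_algebra.
From mathcomp Require Import reals exp.
Set Implicit Arguments. Unset Strict Implicit. Unset Printing Implicit Defensive.
Import Order.TTheory GRing.Theory Num.Theory.
Local Open Scope ring_scope.

Definition dotv (R : realType) (k : nat) (u v : 'rV[R]_k) : R := (u *m v^T) 0 0.

Definition on_sphere (R : realType) (k : nat) (u : 'rV[R]_k) : Prop := dotv u u = 1.

Definition orthb (R : realType) (k : nat) (u v : 'rV[R]_k) : bool := dotv u v == 0.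

(* A code C ⊆ (S^{k-1})^n with |C| = m is given by an injective enumeration
   c : 'I_m -> ('I_n -> 'rV[R]_k) of its codewords. *)
Definition sphere_code (R : realType) (k n m : nat) (c : 'I_m -> 'I_n -> 'rV[R]_k) : Prop :=
  injective c /\ forall (x : 'I_m) (i : 'I_n), on_sphere (c x i).

Definition vector_k_separating (R : realType) (k n m : nat)
  (c : 'I_m -> 'I_n -> 'rV[R]_k) : Prop :=
  forall s : 'I_k -> 'I_m, injective s ->
    exists i : 'I_n, forall a b : 'I_k, a != b -> orthb (c (s a) i) (c (s b) i).

Definition log2 (R : realType) (x : R) : R := ln x / ln 2.

Definition prob_subset (R : realType) (k n m : nat) (c : 'I_m -> 'I_n -> 'rV[R]_k) : R :=
  (#|[set p : {set 'I_m} * 'I_n | (#|p.1| == k.-1) &&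
       [forall a in p.1, forall b in p.1, (a != b) ==> orthb (c a p.2) (c b p.2)]]|%:R)
  / ((#|[set S : {set 'I_m} | #|S| == k.-1]| * n)%N%:R).

Definition prob_tuple (R : realType) (k n m : nat) (c : 'I_m -> 'I_n -> 'rV[R]_k) : R :=
  (#|[set p : {ffun 'I_k.-1 -> 'I_m} * 'I_n |
       [forall a, forall b, (a != b) ==> orthb (c (p.1 a) p.2) (c (p.1 b) p.2)]]|%:R)
  / ((m ^ k.-1 * n)%N%:R).

From HB Require Import structures.
From mathcomp Require Import all_boot all_order all_algebra fingroup perm.
From mathcomp Require Import reals exp.
From mathcomp Require Import ring lra zify.
Set Implicit Arguments. Unset Strict Implicit. Unset Printing Implicit Defensive.
Import Order.TTheory GRing.Theory Num.Theory.
Local Open Scope ring_scope.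

(* Fix a set T of k - 2 codewords and a coordinate i. The codewords x outside
   T that keep T + x pairwise orthogonal at i (the link of T at i) have their
   i-th entries in the plane orthogonal to the entries of T, where
   orthogonality of unit vectors is a properly 2-colourable relation. By
   k-separation, any two codewords outside T are orthogonal, hence coloured
   differently, in some common link. Hansel's lemma (a Kraft inequality plus
   AM-GM) then gives sum_i |link_i T| >= (m - k + 2) log2 (m - k + 2).
   Summing over all T counts every orthogonal (k - 1)-set at every coordinate
   k - 1 times, which is the first bound. Ordering the (k - 1)-sets and the
   Bernoulli inequality m^_(k-1) >= (1 - (k-2)^2/m) m^(k-1) give the second. *)

Section DotProduct.
Variable R : realType.

Lemma dotvE k (u v : 'rV[R]_k) : dotv u v = \sum_j u 0 j * v 0 j.
Proof. by rewrite /dotv !mxE; apply: eq_bigr => j _; rewrite mxE. Qed.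

Lemma dotvC k (u v : 'rV[R]_k) : dotv u v = dotv v u.
Proof. by rewrite !dotvE; apply: eq_bigr => j _; rewrite mulrC. Qed.

Lemma dotvZl k a (u v : 'rV[R]_k) : dotv (a *: u) v = a * dotv u v.
Proof. by rewrite !dotvE mulr_sumr; apply: eq_bigr => j _; rewrite mxE mulrA. Qed.

Lemma dotv_gt0 k (u : 'rV[R]_k) : u != 0 -> 0 < dotv u u.
Proof.
move=> u_neq0; have sq_ge0 j : 0 <= u 0 j * u 0 j by rewrite -expr2 sqr_ge0.
rewrite dotvE lt_def sumr_ge0 ?andbT //; apply: contra u_neq0 => /eqP/psumr_eq0P sq0.
apply/eqP/rowP => j; rewrite mxE; have /eqP := sq0 (fun j _ => sq_ge0 j) j isT.
by rewrite mulf_eq0 orbb => /eqP.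
Qed.

Lemma exists_unit_orthogonal k (L : seq 'rV[R]_k) : (size L < k)%N ->
  exists2 s : 'rV[R]_k, dotv s s = 1 & forall w, w \in L -> dotv s w = 0.
Proof.
move=> ltLk.
pose M : 'M[R]_(size L, k) := \matrix_(j, l) (nth 0 L j) 0 l.
have /rowV0Pn[u u_ker u_neq0] : kermx M^T != 0.
  by rewrite -mxrank_eq0 mxrank_ker -lt0n subn_gt0 (leq_ltn_trans (rank_leq_col _)).
have uM : u *m M^T = 0 by apply/sub_kermxP: u_ker.
have u_orth w : w \in L -> dotv u w = 0.
  move=> wL; have wi : (index w L < size L)%N by rewrite index_mem.
  have := congr1 (fun A : 'M[R]_(1, size L) => A 0 (Ordinal wi)) uM; rewrite !mxE => <-.
  by rewrite /dotv mxE; apply: eq_bigr => l _; rewrite !mxE nth_index.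
have u_pos := dotv_gt0 u_neq0.
exists ((Num.sqrt (dotv u u))^-1 *: u); last first.
  by move=> w wL; rewrite dotvZl (u_orth w wL) mulr0.
rewrite dotvZl dotvC dotvZl mulrA -expr2 exprVn sqr_sqrtr ?ltW // mulVf //.
by rewrite gt_eqF.
Qed.

Lemma orthonormal_parseval k (L : seq 'rV[R]_k) :
  size L = k -> pairwise (@orthb R k) L -> (forall w, w \in L -> dotv w w = 1) ->
  forall u v : 'rV[R]_k, dotv u v = \sum_(w <- L) dotv u w * dotv v w.
Proof.
move=> sL pL unitL u v.
pose M : 'M[R]_k := \matrix_(j, l) (nth 0 L j) 0 l.
have dotM a b : \sum_j M a j * M^T j b = dotv (nth 0 L a) (nth 0 L b).
  by rewrite dotvE; apply: eq_bigr => j _; rewrite !mxE.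
have MMT : M *m M^T = 1%:M.
  have La : forall a : 'I_k, (a < size L)%N by move=> a; rewrite sL.
  apply/matrixP => a b; rewrite !mxE dotM.
  have [->|ab] := eqVneq a b; first by rewrite unitL ?mem_nth.
  apply/eqP; have /pairwiseP := pL; move=> /(_ 0).
  case: (ltngtP a b) => [lt_ab|lt_ba|/val_inj eab]; last by rewrite eab eqxx in ab.
  - by move=> /(_ a b (La a) (La b) lt_ab).
  - by rewrite dotvC => /(_ b a (La b) (La a) lt_ba).
have -> : dotv u v = ((u *m M^T) *m (M *m v^T)) 0 0.
  by rewrite mulmxA -(mulmxA u) (mulmx1C MMT) mulmx1.
rewrite mxE (big_nth 0) big_mkord sL; apply: eq_bigr => j _.
rewrite !mxE; congr (_ * _); rewrite dotvE; apply: eq_bigr => l _; rewrite !mxE //.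
by rewrite mulrC.
Qed.

End DotProduct.

Section PlaneSide.
Variable R : realType.

(* A point of the unit circle satisfies [plane_side] iff its argument lies in
   [0, pi/2[ or [pi, 3pi/2[; a quarter turn maps this set onto its complement,
   so orthogonal points lie on different sides. *)
Definition plane_side (a b : R) : bool := (0 < a * b) || (b == 0).

Lemma orth_unit_plane_rot (a b c d : R) :
  a ^+ 2 + b ^+ 2 = 1 -> c ^+ 2 + d ^+ 2 = 1 -> a * c + b * d = 0 ->
  exists2 t : R, t ^+ 2 = 1 & c = - (t * b) /\ d = t * a.
Proof.
move=> ab1 cd1 orth; exists (a * d - b * c); last split.
- have : (a * d - b * c) ^+ 2 + (a * c + b * d) ^+ 2
         = (a ^+ 2 + b ^+ 2) * (c ^+ 2 + d ^+ 2) by ring.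
  by rewrite orth ab1 cd1 mulr1 expr0n addr0.
- have : c + (a * d - b * c) * b = a * (a * c + b * d) + c * (1 - (a ^+ 2 + b ^+ 2)).
    by ring.
  by rewrite orth ab1 subrr !mulr0 addr0 => /eqP; rewrite addr_eq0 => /eqP.
- have : d - (a * d - b * c) * a = b * (a * c + b * d) + d * (1 - (a ^+ 2 + b ^+ 2)).
    by ring.
  by rewrite orth ab1 subrr !mulr0 addr0 => /eqP; rewrite subr_eq0 => /eqP.
Qed.

Lemma plane_side_rot (a b t : R) : a ^+ 2 + b ^+ 2 = 1 -> t ^+ 2 = 1 ->
  plane_side (- (t * b)) (t * a) = ~~ plane_side a b.
Proof.
move=> ab1 t1; rewrite /plane_side.
have t_neq0 : t != 0 by apply: contra_eq_neq t1 => ->; rewrite expr0n eq_sym oner_neq0.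
have -> : - (t * b) * (t * a) = - (a * b) by rewrite -[RHS]mulr1 -t1; ring.
rewrite oppr_gt0 mulf_eq0 (negbTE t_neq0) /=.
case: (ltrgtP 0 (a * b)) => [ab_gt0|ab_lt0|ab0] /=.
- by apply/negbTE; apply: contraTneq ab_gt0 => ->; rewrite mul0r ltxx.
- by apply/esym; apply: contraTneq ab_lt0 => ->; rewrite mulr0 ltxx.
- move/esym/eqP: ab0; rewrite mulf_eq0.
  have [a0 _|a_neq0] := eqVneq a 0; last by move=> /= ->.
  apply/esym/eqP => b0; move: ab1; rewrite a0 b0 expr0n addr0 => /eqP.
  by rewrite eq_sym oner_eq0.
Qed.

Lemma plane_side_orth (a b c d : R) :
  a ^+ 2 + b ^+ 2 = 1 -> c ^+ 2 + d ^+ 2 = 1 -> a * c + b * d = 0 ->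
  plane_side a b != plane_side c d.
Proof.
move=> ab1 cd1 orth; have [t t1 [-> ->]] := orth_unit_plane_rot ab1 cd1 orth.
by rewrite plane_side_rot //; case: plane_side.
Qed.

End PlaneSide.

Lemma card_sum_in (T : finType) (A : {set T}) : #|A| = (\sum_x (x \in A))%N.
Proof. by rewrite -sum1_card big_mkcond; apply: eq_bigr => x _; case: (x \in A). Qed.

Lemma card_ffun_agree n (A : {set 'I_n}) (h : 'I_n -> bool) :
  #|[set g : {ffun 'I_n -> bool} | [forall i in A, g i == h i]]| = (2 ^ (n - #|A|))%N.
Proof.
pose F := fun i : 'I_n => if i \in A then pred1 (h i) else predT.
have -> : #|[set g : {ffun 'I_n -> bool} | [forall i in A, g i == h i]]| =
          #|(family F : simpl_pred {ffun 'I_n -> bool})|.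
  apply: eq_card => g; rewrite inE.
  by apply/forallP/familyP => agree i; have := agree i; rewrite /F; case: (i \in A).
rewrite card_family foldrE big_map big_enum /=.
rewrite (eq_bigr (fun i => if i \in ~: A then 2 else 1)%N); last first.
  by move=> i _; rewrite /F inE; case: (i \in A); rewrite ?card1 ?card_bool.
by rewrite -big_mkcond prod_nat_const cardsCs setCK card_ord.
Qed.

Lemma log2_card_le_sum (R : realType) (I : finType) (X : {set I}) (t : I -> nat) :
  \sum_(x in X) ((2 : R) ^+ t x)^-1 <= 1 ->
  #|X|%:R * log2 (#|X|%:R : R) <= (\sum_(x in X) t x)%:R.
Proof.
move=> kraft; have [->|X_gt0] := posnP #|X|; first by rewrite mul0r.
have X_pos : (0 : R) < #|X|%:R by rewrite ltr0n.
have w_ge0 : {in mem X, forall x, 0 <= ((2 : R) ^+ t x)^-1}.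
  by move=> x _; rewrite invr_ge0 exprn_ge0.
have [AGM _] := leif_AGM w_ge0.
have mean_le : (\sum_(x in X) ((2 : R) ^+ t x)^-1) / #|X|%:R <= #|X|%:R^-1.
  by rewrite ler_pdivrMr // mulVf ?gt_eqF.
have pow_le : (2 : R) ^- (\sum_(x in X) t x) <= (#|X|%:R^-1) ^+ #|X|.
  move: AGM; rewrite prodfV prodrXr => /le_trans; apply; apply: lerXn2r => //.
    by rewrite nnegrE divr_ge0 // sumr_ge0 // => x _; rewrite invr_ge0 exprn_ge0.
  by rewrite nnegrE invr_ge0 ltW.
rewrite exprVn lef_pV2 ?posrE ?exprn_gt0 // -ler_ln ?posrE ?exprn_gt0 // !lnXn // in pow_le.
have ln2_gt0 : (0 : R) < ln 2 by rewrite ln_gt0 // ltr1n.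
rewrite /log2 mulrA ler_pdivrMr // mulrC [_ * ln 2]mulrC.
by move: pow_le; rewrite -(mulr_natr (ln _)) -(mulr_natr (ln 2)).
Qed.

Section Hansel.
Variables (I : finType) (n : nat) (X : {set I}) (V : 'I_n -> {set I}).
Variable f : 'I_n -> I -> bool.
Hypothesis subV : forall i, V i \subset X.
Hypothesis separating : forall x y, x \in X -> y \in X -> x != y ->
  exists i, [&& x \in V i, y \in V i & f i x != f i y].

Definition cover_degree (x : I) := #|[set i | x \in V i]|.

Lemma sum_card_cover : (\sum_i #|V i| = \sum_(x in X) cover_degree x)%N.
Proof.
rewrite /cover_degree; under eq_bigr do rewrite card_sum_in.
under [RHS]eq_bigr do rewrite card_sum_in.
rewrite exchange_big [RHS]big_mkcond; apply: eq_bigr => x _.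
have [xX|xNX] := boolP (x \in X); first by apply: eq_bigr => i _; rewrite inE.
apply: big1 => i _; case: (boolP (x \in V i)) => // /(subsetP (subV i)) xX.
by rewrite xX in xNX.
Qed.

(* A bit string g : 'I_n -> bool agrees with f _ x on the cover of x for at
   most one x, since two such x would be separated by some i. *)
Lemma kraft_separating : (\sum_(x in X) 2 ^ (n - cover_degree x) <= 2 ^ n)%N.
Proof.
pose agree (g : {ffun 'I_n -> bool}) x := [forall i, (x \in V i) ==> (g i == f i x)].
have agreeE x : (2 ^ (n - cover_degree x) = \sum_g agree g x)%N.
  rewrite -(card_ffun_agree _ (fun i => f i x)) card_sum_in; apply: eq_bigr => g _.
  by rewrite !inE; congr nat_of_bool; apply: eq_forallb => i; rewrite inE.
rewrite (eq_bigr _ (fun x _ => agreeE x)) exchange_big /=.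
have -> : (2 ^ n = \sum_(g : {ffun 'I_n -> bool}) 1)%N.
  by rewrite sum1_card card_ffun card_bool card_ord.
apply: leq_sum => g _; rewrite -big_mkcondr /= sum1dep_card leqNgt.
apply/negP => /card_gt1P [x [y [+ + xy]]]; rewrite !inE => /andP[xX agx] /andP[yX agy].
have [i /and3P[xi yi]] := separating xX yX xy.
move: agx agy => /forallP/(_ i)/implyP/(_ xi)/eqP <- /forallP/(_ i)/implyP/(_ yi)/eqP <-.
by rewrite eqxx.
Qed.

Lemma hansel (R : realType) : #|X|%:R * log2 (#|X|%:R : R) <= (\sum_i #|V i|)%:R.
Proof.
rewrite sum_card_cover; apply: log2_card_le_sum.
have weightE x : ((2 ^ (n - cover_degree x))%:R : R) = 2 ^+ n * (2 ^+ cover_degree x)^-1.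
  have deg_le : (cover_degree x <= n)%N by rewrite -[leqRHS](card_ord n) max_card.
  by rewrite natrX -[in RHS](subnK deg_le) exprD mulfK // expf_neq0 // pnatr_eq0.
have := kraft_separating; rewrite -(ler_nat R) natr_sum (eq_bigr _ (fun x _ => weightE x)).
by rewrite -mulr_sumr natrX -[Y in _ <= Y -> _]mulr1 ler_pM2l // exprn_gt0.
Qed.

End Hansel.

Section OrthogonalSets.
Variables (R : realType) (k n m : nat) (c : 'I_m -> 'I_n -> 'rV[R]_k).

Definition orth_at (S : {set 'I_m}) (i : 'I_n) : bool :=
  [forall a in S, forall b in S, (a != b) ==> orthb (c a i) (c b i)].

Lemma orth_atP (S : {set 'I_m}) i a b :
  orth_at S i -> a \in S -> b \in S -> a != b -> dotv (c a i) (c b i) = 0.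
Proof.
move=> /forallP/(_ a)/implyP orthS aS bS ab.
by move: (orthS aS) => /forallP/(_ b)/implyP/(_ bS)/implyP/(_ ab)/eqP.
Qed.

Lemma orth_at_sub (A B : {set 'I_m}) i : A \subset B -> orth_at B i -> orth_at A i.
Proof.
move=> /subsetP AB orthB; apply/forallP => a; apply/implyP => aA.
apply/forallP => b; apply/implyP => bA; apply/implyP => ab.
by apply/eqP; apply: (orth_atP orthB); rewrite ?AB.
Qed.

Definition link (T : {set 'I_m}) (i : 'I_n) : {set 'I_m} :=
  [set x | (x \notin T) && orth_at (x |: T) i].

Lemma link_orth (T : {set 'I_m}) i x t :
  x \in link T i -> t \in T -> dotv (c x i) (c t i) = 0.
Proof.
rewrite inE => /andP[xNT orthxT] tT.
apply: (orth_atP orthxT); rewrite ?inE ?eqxx ?tT ?orbT //.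
by apply: contraNneq xNT => ->.
Qed.

Lemma link_orth_at (T : {set 'I_m}) i x : x \in link T i -> orth_at T i.
Proof. by rewrite inE => /andP[_]; apply: orth_at_sub; rewrite subsetUr. Qed.

Lemma card_link_mem l x i :
  #|[set T : {set 'I_m} | (#|T| == l) && (x \in link T i)]| =
  #|[set S : {set 'I_m} | [&& #|S| == l.+1, x \in S & orth_at S i]]|.
Proof.
set D := [set T : {set 'I_m} | _].
have -> : [set S : {set 'I_m} | [&& #|S| == l.+1, x \in S & orth_at S i]] =
          (fun T => x |: T) @: D.
  apply/setP => S; rewrite inE; apply/idP/imsetP.
  - case/and3P => /eqP cardS xS orthS; exists (S :\ x); last by rewrite setD1K.
    rewrite inE; apply/andP; split.
      by move: cardS; rewrite (cardsD1 x S) xS add1n => -[->].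
    by rewrite inE setD11 setD1K.
  - case=> T; rewrite !inE => /andP[/eqP cardT /andP[xNT orthxT]] ->.
    by rewrite cardsU1 xNT cardT setU11 orthxT add1n eqxx.
rewrite card_in_imset // => T1 T2.
rewrite !inE => /andP[_ /andP[xT1 _]] /andP[_ /andP[xT2 _]] e.
by rewrite -(setU1K xT1) -(setU1K xT2) e.
Qed.

Definition orth_sets (r : nat) : {set {set 'I_m} * 'I_n} :=
  [set p : {set 'I_m} * 'I_n | (#|p.1| == r) && orth_at p.1 p.2].

Lemma sum_card_link l :
  (\sum_(T : {set 'I_m} | #|T| == l) \sum_i #|link T i| = l.+1 * #|orth_sets l.+1|)%N.
Proof.
rewrite exchange_big /=.
have -> : #|orth_sets l.+1| =
          (\sum_i #|[set S : {set 'I_m} | (#|S| == l.+1) && orth_at S i]|)%N.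
  rewrite card_sum_in; under [RHS]eq_bigr do rewrite card_sum_in.
  by rewrite exchange_big pair_big /=; apply: eq_bigr => -[S j] _; rewrite !inE.
rewrite big_distrr /=; apply: eq_bigr => i _.
transitivity (\sum_x #|[set T : {set 'I_m} | (#|T| == l) && (x \in link T i)]|)%N.
  under eq_bigr do rewrite card_sum_in.
  under [RHS]eq_bigr do rewrite card_sum_in.
  rewrite exchange_big [LHS]big_mkcond; apply: eq_bigr => x _.
  by rewrite big_mkcond; apply: eq_bigr => T _; rewrite !inE; case: (#|T| == l).
under eq_bigr do rewrite card_link_mem card_sum_in.
rewrite exchange_big card_sum_in big_distrr; apply: eq_bigr => S _; rewrite inE.
have [/eqP cardS|cardNS] /= := boolP (#|S| == l.+1); last first.
  by rewrite muln0; apply: big1 => x _; rewrite inE (negbTE cardNS).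
have [orthS|orthNS] /= := boolP (orth_at S i); last first.
  by rewrite muln0; apply: big1 => x _; rewrite !inE (negbTE orthNS) !andbF.
rewrite muln1 -[in RHS]cardS card_sum_in; apply: eq_bigr => x _.
by rewrite !inE cardS eqxx orthS andbT.
Qed.

Definition orth_tuples (r : nat) : {set {ffun 'I_r -> 'I_m} * 'I_n} :=
  [set p : {ffun 'I_r -> 'I_m} * 'I_n |
    [forall a, forall b, (a != b) ==> orthb (c (p.1 a) p.2) (c (p.1 b) p.2)]].

(* Listing an orthogonal r-set in each of its r! orders gives distinct
   orthogonal r-tuples. *)
Lemma card_orth_sets_fact_le r : (0 < m)%N -> (#|orth_sets r| * r`! <= #|orth_tuples r|)%N.
Proof.
move=> m_gt0; pose x0 : 'I_m := Ordinal m_gt0.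
pose order (q : ({set 'I_m} * 'I_n) * {perm 'I_r}) :=
  ([ffun a => nth x0 (enum q.1.1) (q.2 a)], q.1.2).
have size_enum (S : {set 'I_m}) : #|S| = r -> size (enum S) = r by move=> <-; rewrite cardE.
have enum_perm (S : {set 'I_m}) (s : {perm 'I_r}) : #|S| = r ->
    S = [set nth x0 (enum S) (s a) | a in 'I_r].
  move=> cardS; apply/setP => x; apply/idP/imsetP => [xS|[a _ ->]]; last first.
    by rewrite -mem_enum mem_nth ?size_enum.
  have xi : (index x (enum S) < r)%N by rewrite -(size_enum S cardS) index_mem mem_enum.
  by exists (s^-1 (Ordinal xi))%g; rewrite // permKV nth_index ?mem_enum.
rewrite -card_Sn -cardsT -cardsX.
rewrite -(card_in_imset (f := order)); last first.
  move=> [[S1 i1] s1] [[S2 i2] s2]; rewrite !inE /=.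
  move=> /andP[/andP[/eqP cardS1 _] _] /andP[/andP[/eqP cardS2 _] _] [e1 ->].
  have e1a a := congr1 (fun g : {ffun 'I_r -> 'I_m} => g a) e1; rewrite /= in e1a.
  have eS : S1 = S2.
    rewrite (enum_perm S1 s1 cardS1) (enum_perm S2 s2 cardS2).
    by apply: eq_in_imset => a _; have := e1a a; rewrite !ffunE.
  subst S2; congr (_, _); apply/permP => a; apply/val_inj.
  by have /eqP := e1a a; rewrite !ffunE nth_uniq ?size_enum ?enum_uniq // => /eqP.
apply/subset_leq_card/subsetP => p /imsetP[[[S i] s]].
rewrite !inE /= => /andP[/andP[/eqP cardS orthS] _] ->; rewrite /=.
apply/forallP => a; apply/forallP => b; apply/implyP => ab; rewrite !ffunE.
have nthS a' : nth x0 (enum S) (s a') \in S by rewrite -mem_enum mem_nth // size_enum.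
apply/eqP; apply: (orth_atP orthS) => //.
rewrite nth_uniq ?size_enum ?enum_uniq //; apply: contra ab => /eqP/val_inj.
by move/perm_inj ->.
Qed.

Lemma prob_subsetE : prob_subset c = #|orth_sets k.-1|%:R / ('C(m, k.-1) * n)%:R.
Proof. by rewrite /prob_subset card_draws card_ord. Qed.

Lemma prob_tupleE : prob_tuple c = #|orth_tuples k.-1|%:R / (m ^ k.-1 * n)%:R.
Proof. by []. Qed.

End OrthogonalSets.

Section SeparatingCode.
Variables (R : realType) (n m l : nat) (c : 'I_m -> 'I_n -> 'rV[R]_l.+2).
Hypothesis c_unit : forall x i, dotv (c x i) (c x i) = 1.

(* Completing the l pairwise orthogonal unit vectors c t i (t in T) and
   c x0 i by a unit vector s gives an orthonormal basis of R^(l+2), so link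
   vectors only have coordinates along c x0 i and s. *)
Lemma link_plane_coords (T : {set 'I_m}) i x0 : #|T| = l -> x0 \in link c T i ->
  exists s : 'rV[R]_l.+2, forall x y, x \in link c T i -> y \in link c T i ->
    dotv (c x i) (c y i) =
    dotv (c x i) (c x0 i) * dotv (c y i) (c x0 i) + dotv (c x i) s * dotv (c y i) s.
Proof.
move=> cardT x0_link; pose LT := [seq c t i | t <- enum T].
have [s s_unit s_orth] : exists2 s : 'rV[R]_l.+2,
    dotv s s = 1 & forall w, w \in rcons LT (c x0 i) -> dotv s w = 0.
  by apply: exists_unit_orthogonal; rewrite size_rcons size_map -cardE cardT.
pose L := LT ++ [:: c x0 i; s].
have size_L : size L = l.+2 by rewrite size_cat size_map -cardE cardT addn2.
have orth_L : pairwise (@orthb R l.+2) L.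
  rewrite pairwise_cat pairwise2 /orthb dotvC s_orth ?mem_rcons ?mem_head // eqxx andbT.
  apply/andP; split.
  - apply/allrelP => _ v /mapP[t tT ->]; rewrite mem_enum in tT.
    rewrite !inE => /orP[] /eqP ->; first by rewrite dotvC (link_orth x0_link tT).
    by rewrite dotvC s_orth // mem_rcons inE map_f ?mem_enum ?orbT.
  - rewrite pairwise_map; apply: (@sub_in_pairwise _ (mem T) [rel a b | a != b]).
    + move=> a b aT bT /= ab; apply/eqP.
      exact: orth_atP (link_orth_at x0_link) aT bT ab.
    + by apply/allP => t; rewrite mem_enum.
    + by rewrite -uniq_pairwise enum_uniq.
have unit_L w : w \in L -> dotv w w = 1.
  rewrite mem_cat => /orP[/mapP[t _ ->] //|].
  by rewrite !inE => /orP[] /eqP ->.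
exists s => x y x_link _.
rewrite (orthonormal_parseval size_L orth_L unit_L) big_cat big_cons big_seq1 /=.
rewrite big1_seq ?add0r // => _ /andP[_ /mapP[t tT ->]]; rewrite mem_enum in tT.
by rewrite (link_orth x_link tT) mul0r.
Qed.

Lemma link_two_coloring (T : {set 'I_m}) i : #|T| = l ->
  exists f : 'I_m -> bool, forall x y, x \in link c T i -> y \in link c T i ->
    orthb (c x i) (c y i) -> f x != f y.
Proof.
move=> cardT; have [x0 x0_link|link0] := pickP (fun x => x \in link c T i); last first.
  by exists xpredT => x y; rewrite link0.
have [s coords] := link_plane_coords cardT x0_link.
exists (fun x => plane_side (dotv (c x i) (c x0 i)) (dotv (c x i) s)).
move=> x y x_link y_link /eqP orth; apply: plane_side_orth; last by rewrite -coords.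
- by rewrite !expr2 -coords.
- by rewrite !expr2 -coords.
Qed.

Hypothesis c_sep : vector_k_separating c.

Lemma link_separating (T : {set 'I_m}) x y : #|T| = l ->
  x \notin T -> y \notin T -> x != y ->
  exists i, [&& x \in link c T i, y \in link c T i & orthb (c x i) (c y i)].
Proof.
move=> cardT xNT yNT xy; pose S := x |: (y |: T).
have cardS : #|S| = l.+2.
  by rewrite !cardsU1 in_setU1 (negbTE xy) (negbTE xNT) yNT cardT.
pose s (a : 'I_l.+2) := @enum_val _ (mem S) (cast_ord (esym cardS) a).
have s_inj : injective s by move=> a b /enum_val_inj/cast_ord_inj.
have [i orth_s] := c_sep s_inj.
have orthS : orth_at c S i.
  apply/forallP => a; apply/implyP => aS; apply/forallP => b; apply/implyP => bS.
  have sK z : z \in S -> z = s (cast_ord cardS (enum_rank_in aS z)).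
    by move=> zS; rewrite /s cast_ordK enum_rankK_in.
  apply/implyP => ab; rewrite (sK a aS) (sK b bS); apply: orth_s.
  by apply: contra ab => /eqP e; rewrite (sK a aS) (sK b bS) e.
exists i; rewrite !inE xNT yNT /=; apply/and3P; split.
- by apply: orth_at_sub orthS; rewrite setUS // subsetUr.
- by apply: orth_at_sub orthS; rewrite subsetUr.
- by apply/eqP; apply: (orth_atP orthS _ _ xy); rewrite !inE eqxx ?orbT.
Qed.

Lemma card_orth_sets_ge :
  'C(m, l.+1)%:R * log2 ((m - l)%:R : R) <= #|orth_sets c l.+1|%:R.
Proof.
have per_set (T : {set 'I_m}) : #|T| == l ->
    (m - l)%:R * log2 ((m - l)%:R : R) <= (\sum_i #|link c T i|)%:R.
  move=> /eqP cardT; have [f f_col] := fin_all_exists (fun i => link_two_coloring i cardT).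
  have cardCT : #|~: T| = (m - l)%N by rewrite cardsCs setCK card_ord cardT.
  rewrite -cardCT; apply: (hansel (f := f)) => [i|x y].
    by apply/subsetP => x; rewrite !inE => /andP[].
  rewrite !inE => xNT yNT xy; have [i /and3P[xi yi orth]] := link_separating cardT xNT yNT xy.
  by exists i; rewrite xi yi f_col.
have sum_le := ler_sum (index_enum _) per_set; rewrite -natr_sum sum_card_link in sum_le.
have sets_l : \sum_(T : {set 'I_m} | #|T| == l) (m - l)%:R * log2 ((m - l)%:R : R) =
    \sum_(T in [set T : {set 'I_m} | #|T| == l]) (m - l)%:R * log2 ((m - l)%:R : R).
  by apply: eq_bigl => T; rewrite inE.
rewrite sets_l sumr_const card_draws card_ord -[X in X <= _]mulr_natl mulrA in sum_le.
rewrite -natrM [('C(m, l) * _)%N]mulnC -mul_bin_left !natrM -mulrA in sum_le.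
by rewrite ler_pM2l ?ltr0n in sum_le.
Qed.

End SeparatingCode.

Lemma expn_sub_le_ffact q n : ((n.+1 - q) ^ q <= n ^_ q)%N.
Proof.
elim: q n => [|q IH] [|n] //=; first by rewrite subSS sub0n exp0n.
by rewrite ffactnS expnS subSS leq_mul ?leq_subr //; have := IH n; rewrite subSS.
Qed.

Lemma Bernoulli_ineq (R : realFieldType) (y : R) q :
  0 <= y -> y <= 1 -> 1 - q%:R * y <= (1 - y) ^+ q.
Proof.
move=> y_ge0 y_le1; elim: q => [|q IH]; first by rewrite mul0r subr0 expr0.
rewrite exprS -natr1.
have y1_ge0 : 0 <= 1 - y by rewrite subr_ge0.
apply: le_trans (ler_wpM2l y1_ge0 IH).
have : 0 <= q%:R * y * y by rewrite !mulr_ge0.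
lra.
Qed.

Lemma ffact_ge_Bernoulli (R : realFieldType) (m l : nat) : (l < m)%N ->
  (1 - (l ^ 2)%N%:R / m%:R) * (m ^ l.+1)%N%:R <= (m ^_ l.+1)%N%:R :> R.
Proof.
move=> l_lt_m; have m_pos : (0 : R) < m%:R by rewrite ltr0n; lia.
have y_ge0 : (0 : R) <= l%:R / m%:R by rewrite divr_ge0.
have y_le1 : (l%:R / m%:R : R) <= 1 by rewrite ler_pdivrMr // mul1r ler_nat ltnW.
have ml : ((m - l)%N%:R : R) = m%:R * (1 - l%:R / m%:R).
  by rewrite natrB ?(ltnW l_lt_m) //; field; rewrite gt_eqF.
apply: (@le_trans _ _ ((m * (m - l) ^ l)%N%:R)); last first.
  by rewrite ler_nat ffactnS leq_mul // -{1}(prednK (leq_ltn_trans _ l_lt_m)) ?expn_sub_le_ffact.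
have -> : (1 - (l ^ 2)%N%:R / m%:R) * (m ^ l.+1)%N%:R
          = (m ^ l.+1)%N%:R * (1 - l%:R * (l%:R / m%:R)) :> R by rewrite natrX; ring.
have -> : ((m * (m - l) ^ l)%N%:R : R) = (m ^ l.+1)%N%:R * (1 - l%:R / m%:R) ^+ l.
  by rewrite natrM !natrX ml exprMn exprS mulrA.
by rewrite ler_wpM2l ?ler0n ?Bernoulli_ineq.
Qed.

Lemma ler_div_pmul_den (R : realFieldType) (a b c d : R) :
  0 < b -> 0 <= d -> b * a <= c -> a / d <= c / (b * d).
Proof.
move=> b_gt0 d_ge0 le_ba_c; rewrite invfM mulrA.
by apply: ler_wpM2r; rewrite ?invr_ge0 // ler_pdivlMr // mulrC.
Qed.

Theorem mainTheorem10 (R : realType) (k n m : nat)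
  (c : 'I_m -> 'I_n -> 'rV[R]_k) :
  (3 <= k)%N ->
  sphere_code c ->
  vector_k_separating c ->
  (k < m)%N ->
  log2 ((m - (k - 2))%N%:R : R) / n%:R <= prob_subset c /\
  (1 - ((k - 2) ^ 2)%N%:R / m%:R) * (log2 ((m - (k - 2))%N%:R : R) / n%:R)
    <= prob_tuple c.
Proof.
move=> k_ge3 [_ c_unit] c_sep k_lt_m.
have [l kE] : exists l, k = l.+2 by exists (k - 2)%N; lia.
subst k; rewrite prob_subsetE prob_tupleE /= subn2 /=.
have sets_ge := card_orth_sets_ge c_unit c_sep.
have log_ge0 : 0 <= log2 ((m - l)%:R : R).
  by rewrite divr_ge0 ?ln_ge0 ?ler1n //; lia.
split; rewrite natrM.
  by apply: ler_div_pmul_den; rewrite // ltr0n bin_gt0; lia.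
rewrite mulrA; apply: ler_div_pmul_den => //; first by rewrite ltr0n expn_gt0; lia.
rewrite mulrCA mulrA.
have ffact_ge := ffact_ge_Bernoulli R (ltnW (ltnW k_lt_m)).
apply: le_trans (ler_wpM2r log_ge0 ffact_ge) _.
rewrite -bin_ffact natrM mulrAC.
apply: le_trans (ler_wpM2r (ler0n _ _) sets_ge) _.
by rewrite -natrM ler_nat card_orth_sets_fact_le //; lia.
Qed.
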